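(* Let ${\mathbf{b}} \in \{A{\mathbf{z}} : {\mathbf{z}} \ge 0\}$ and suppose there exist $$\widetilde{{\mathbf{x}}}^* \in \operatorname{argmin}_{{\mathbf{x}} \geq 0} \|{\mathbf{x}}\|_0 \quad\text{subject to}\quad A{\mathbf{x}} = {\mathbf{b}}$$ and a vector ${\mathbf{c}}$ such that, with $\mathcal{J} = \mathrm{supp}(\widetilde{{\mathbf{x}}}^* )$, $$\frac{P {\mathbf{e}}_j}{\| P {\mathbf{e}}_j \|_2} \cdot {\mathbf{c}} = 1 \ \ \forall j \in \mathcal{J}, \qquad \frac{P {\mathbf{e}}_i}{\| P {\mathbf{e}}_i \|_2} \cdot {\mathbf{c}} < 1 \ \ \forall i \in \mathcal{J}^c.$$ Then for every $s \in [\|\widetilde{{\mathbf{x}}}^*\|_\infty, \infty]$, every solution ${\mathbf{y}}$ of $$\min_{0 \leq {\mathbf{x}} \leq s} \| W {\mathbf{x}} \|_1 \quad \text{subject to} \quad A {\mathbf{x}} = {\mathbf{b}}$$ also solves $\min_{0 \leq {\mathbf{x}} \leq s} \|{\mathbf{x}}\|_0$ subject to $A{\mathbf{x}} = {\mathbf{b}}$, and $\mathrm{supp}({\mathbf{y}}) = \mathrm{supp}(\widetilde{{\mathbf{x}}}^* )$.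
   Context: $A \in \mathbb{R}^{m\times n}$ is a matrix, $A^\dagger$ its Moore–Penrose pseudoinverse, and $P = A^\dagger A$ the orthogonal projection onto $\mathcal{N}(A)^\perp$. ${\mathbf{e}}_1,\dots,{\mathbf{e}}_n$ are the standard unit vectors, assumed not to lie in $\mathcal{N}(A)$, so $w_i := \|P{\mathbf{e}}_i\|_2 > 0$; $W = \mathrm{diag}(w_1,\dots,w_n)$. $\|{\mathbf{v}}\|_0 = \#\{i : v_i \neq 0\}$. Inequalities are componentwise; $s=\infty$ means only ${\mathbf{x}}\ge 0$. *)

From mathcomp Require Import all_boot all_order all_algebra.
Set Implicit Arguments. Unset Strict Implicit. Unset Printing Implicit Defensive.
Import Order.TTheory GRing.Theory Num.Theory.
Local Open Scope ring_scope.

Section Defs.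
Variable R : rcfType.

(* X is the Moore-Penrose pseudoinverse of A (the four Penrose conditions;
   such an X exists and is unique). *)
Definition is_MP_pinv m n (A : 'M[R]_(m, n)) (X : 'M[R]_(n, m)) : Prop :=
  [/\ A *m X *m A = A, X *m A *m X = X,
      (A *m X)^T = A *m X & (X *m A)^T = X *m A].

Definition evec n (i : 'I_n) : 'cV[R]_n := delta_mx i 0.

Definition dotv n (u v : 'cV[R]_n) : R := \sum_k u k 0 * v k 0.
Definition norm2 n (u : 'cV[R]_n) : R := Num.sqrt (dotv u u).
Definition norm1 n (u : 'cV[R]_n) : R := \sum_k `|u k 0|.
Definition norminf n (u : 'cV[R]_n) : R := \big[Num.max/0]_k `|u k 0|.

Definition supp n (u : 'cV[R]_n) : {set 'I_n} := [set i | u i 0 != 0].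
Definition l0 n (u : 'cV[R]_n) : nat := #|supp u|.

(* componentwise 0 <= x (and x <= s when s = Some t; s = None means s = oo) *)
Definition nonneg n (x : 'cV[R]_n) : Prop := forall i, 0 <= x i 0.
Definition boxed n (s : option R) (x : 'cV[R]_n) : Prop :=
  forall i, 0 <= x i 0 /\ (if s is Some t then x i 0 <= t else True : Prop).

(* P = A^dagger A,  w_i = ||P e_i||_2,  W = diag(w) *)
Definition wcoef m n (A : 'M[R]_(m, n)) (Ad : 'M[R]_(n, m)) (i : 'I_n) : R :=
  norm2 ((Ad *m A) *m evec i).
Definition Wmat m n (A : 'M[R]_(m, n)) (Ad : 'M[R]_(n, m)) : 'M[R]_n :=
  diag_mx (\row_i wcoef A Ad i).

Definition is_argmin n (feas : 'cV[R]_n -> Prop) (f : 'cV[R]_n -> R) x : Prop :=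
  feas x /\ forall y, feas y -> f x <= f y.
Definition is_argmin_nat n (feas : 'cV[R]_n -> Prop) (f : 'cV[R]_n -> nat) x : Prop :=
  feas x /\ forall y, feas y -> (f x <= f y)%N.
Definition ext_ge (lo : R) (s : option R) : Prop :=
  if s is Some t then lo <= t else True.
End Defs.

From mathcomp Require Import all_boot all_order all_algebra.
Set Implicit Arguments. Unset Strict Implicit. Unset Printing Implicit Defensive.
Import Order.TTheory GRing.Theory Num.Theory.
Local Open Scope ring_scope.

(* Write P = A^+ A, w_i = ||P e_i||_2 and d_i = (P e_i) . c.  The hypotheses on
   c say exactly that d_i = w_i on J = supp x* and d_i < w_i off J.  The map
   x |-> sum_i d_i x_i equals c . (A^+ (A x)), so it takes the same value on
   all solutions of A x = b; hence for feasible x >= 0 we get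
        ||W x||_1 = sum_i w_i x_i >= sum_i d_i x_i = sum_i d_i x*_i = ||W x*||_1,
   with equality only if x vanishes off J.  Since x* is feasible for every box
   bound s >= ||x*||_oo, a weighted-l1 minimiser y must satisfy
   supp y \subset J; the l0-minimality of x* then forces supp y = J, and so y
   is also an l0-minimiser in the box. *)

Lemma mul_evec_entry (R : rcfType) p n (M : 'M[R]_(p, n)) (i : 'I_n) k :
  (M *m evec R i) k 0 = M k i.
Proof. by rewrite /evec -colE mxE. Qed.

Lemma norm2_gt0 (R : rcfType) n (v : 'cV[R]_n) : v != 0 -> 0 < norm2 v.
Proof.
move=> v_neq0; rewrite /norm2 sqrtr_gt0 /dotv lt0r.
have sq_ge0 k : true -> 0 <= v k 0 * v k 0 by move=> _; rewrite -expr2 sqr_ge0.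
rewrite sumr_ge0 // andbT; apply: contra v_neq0 => /eqP /(psumr_eq0P sq_ge0) v0.
apply/eqP/matrixP => k j; rewrite (ord1 j) mxE.
by have /eqP := v0 k isT; rewrite mulf_eq0 orbb => /eqP.
Qed.

Lemma boxed_nonneg (R : rcfType) n (s : option R) (x : 'cV[R]_n) :
  boxed s x -> nonneg x.
Proof. by move=> x_box i; case: (x_box i). Qed.

Lemma nonneg_boxed (R : rcfType) n (s : option R) (x : 'cV[R]_n) :
  nonneg x -> ext_ge (norminf x) s -> boxed s x.
Proof.
move=> x_ge0 s_ge i; split; first exact: x_ge0.
case: s s_ge => // t /=; apply: le_trans.
by rewrite -[leLHS]ger0_norm ?x_ge0 //; apply: le_bigmax.
Qed.

Lemma supp_eq_of_subset (R : rcfType) n (x y : 'cV[R]_n) :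
  supp y \subset supp x -> (l0 x <= l0 y)%N -> supp y = supp x.
Proof. by move=> sub le_l0; apply/eqP; rewrite eqEcard sub. Qed.

Section DualCertificate.
Variables (R : rcfType) (m n : nat) (A : 'M[R]_(m, n)).
Variables (w d : 'I_n -> R) (J : {set 'I_n}).
Hypothesis d_eq_on : forall i, i \in J -> d i = w i.
Hypothesis d_lt_off : forall i, i \notin J -> d i < w i.
Hypothesis d_pairing : forall x x' : 'cV[R]_n,
  A *m x = A *m x' -> \sum_i d i * x i 0 = \sum_i d i * x' i 0.

Lemma d_le_w i : d i <= w i.
Proof.
by case: (boolP (i \in J)) => iJ; [rewrite d_eq_on | exact/ltW/d_lt_off].
Qed.

Lemma gap_eq0_supp (x : 'cV[R]_n) : nonneg x ->
  \sum_i (w i - d i) * x i 0 = 0 -> supp x \subset J.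
Proof.
move=> x_ge0 gap0; have term_ge0 i : true -> 0 <= (w i - d i) * x i 0.
  by move=> _; rewrite mulr_ge0 ?x_ge0 // subr_ge0 d_le_w.
apply/subsetP => i; rewrite inE; apply: contraR => iNJ.
have /eqP := psumr_eq0P term_ge0 gap0 (i := i) isT.
by rewrite mulf_eq0 subr_eq0 gt_eqF ?d_lt_off.
Qed.

Lemma sum_w_eq_d (x : 'cV[R]_n) : supp x \subset J ->
  \sum_i w i * x i 0 = \sum_i d i * x i 0.
Proof.
move=> /subsetP xJ; apply: eq_bigr => i _.
case: (boolP (i \in supp x)) => [/xJ /d_eq_on -> // |].
by rewrite inE negbK => /eqP ->; rewrite !mulr0.
Qed.

Lemma certified_supp (xs y : 'cV[R]_n) :
  nonneg y -> supp xs \subset J -> A *m y = A *m xs ->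
  \sum_i w i * y i 0 <= \sum_i w i * xs i 0 -> supp y \subset J.
Proof.
move=> y_ge0 xsJ Ay le_wy; apply: gap_eq0_supp => //.
have le_dw : \sum_i d i * y i 0 <= \sum_i w i * y i 0.
  by apply: ler_sum => i _; rewrite ler_wpM2r ?y_ge0 ?d_le_w.
have eq_wd : \sum_i w i * y i 0 = \sum_i d i * y i 0.
  apply/eqP; rewrite eq_le le_dw andbT.
  by rewrite (le_trans le_wy) // sum_w_eq_d // (d_pairing Ay).
under eq_bigr do rewrite mulrBl.
by rewrite sumrB eq_wd subrr.
Qed.

End DualCertificate.

Section Pseudoinverse.
Variables (R : rcfType) (m n : nat) (A : 'M[R]_(m, n)) (Ad : 'M[R]_(n, m)).
Variable c : 'cV[R]_n.

Definition dual_coef (i : 'I_n) : R := \sum_k (Ad *m A) k i * c k 0.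

(* The columns of P are nonzero when those of A are, since A P = A. *)
Lemma wcoef_gt0 i : A *m Ad *m A = A -> A *m evec R i != 0 -> 0 < wcoef A Ad i.
Proof.
move=> AAdA Aei_neq0; apply: norm2_gt0; apply: contraNneq Aei_neq0 => Pei0.
by rewrite -AAdA -!mulmxA [Ad *m (A *m _)]mulmxA Pei0 mulmx0.
Qed.

Lemma dot_normalized_col i :
  dotv ((norm2 ((Ad *m A) *m evec R i))^-1 *: ((Ad *m A) *m evec R i)) c
  = (wcoef A Ad i)^-1 * dual_coef i.
Proof.
rewrite /dotv /dual_coef mulr_sumr; apply: eq_bigr => k _.
by rewrite mxE mul_evec_entry mulrA.
Qed.

Lemma dual_coef_eq i : 0 < wcoef A Ad i ->
  dotv ((norm2 ((Ad *m A) *m evec R i))^-1 *: ((Ad *m A) *m evec R i)) c = 1 ->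
  dual_coef i = wcoef A Ad i.
Proof.
rewrite dot_normalized_col => w_gt0 /(congr1 (GRing.mul (wcoef A Ad i))).
by rewrite mulVKf ?mulr1 ?gt_eqF.
Qed.

Lemma dual_coef_lt i : 0 < wcoef A Ad i ->
  dotv ((norm2 ((Ad *m A) *m evec R i))^-1 *: ((Ad *m A) *m evec R i)) c < 1 ->
  dual_coef i < wcoef A Ad i.
Proof. by rewrite dot_normalized_col => w_gt0; rewrite ltr_pdivrMl ?mulr1. Qed.

(* sum_i d_i x_i = c . (A^+ (A x)): the pairing only sees A x. *)
Lemma dual_pairing (x : 'cV[R]_n) :
  \sum_i dual_coef i * x i 0 = \sum_k c k 0 * (Ad *m (A *m x)) k 0.
Proof.
under eq_bigr do rewrite /dual_coef mulr_suml.
rewrite exchange_big /=; apply: eq_bigr => k _.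
rewrite mulmxA mxE mulr_sumr; apply: eq_bigr => i _.
by rewrite mulrA [c k 0 * _]mulrC.
Qed.

Lemma dual_pairing_congr (x x' : 'cV[R]_n) : A *m x = A *m x' ->
  \sum_i dual_coef i * x i 0 = \sum_i dual_coef i * x' i 0.
Proof. by move=> Ax; rewrite !dual_pairing Ax. Qed.

Lemma norm1_Wmat (x : 'cV[R]_n) : (forall i, 0 < wcoef A Ad i) -> nonneg x ->
  norm1 (Wmat A Ad *m x) = \sum_i wcoef A Ad i * x i 0.
Proof.
move=> w_gt0 x_ge0; rewrite /norm1 /Wmat mul_diag_mx; apply: eq_bigr => i _.
by rewrite !mxE ger0_norm // mulr_ge0 ?x_ge0 // ltW.
Qed.

End Pseudoinverse.

Theorem corollary2 (R : rcfType) (m n : nat) (A : 'M[R]_(m, n))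
  (Ad : 'M[R]_(n, m)) (b : 'cV[R]_m) (xs : 'cV[R]_n) (c : 'cV[R]_n) :
  is_MP_pinv A Ad ->
  (forall i : 'I_n, A *m evec R i != 0) ->
  (exists z : 'cV[R]_n, nonneg z /\ A *m z = b) ->
  is_argmin_nat (fun x => nonneg x /\ A *m x = b) (@l0 R n) xs ->
  (forall j, j \in supp xs ->
     dotv ((norm2 ((Ad *m A) *m evec R j))^-1 *: ((Ad *m A) *m evec R j)) c = 1) ->
  (forall i, i \notin supp xs ->
     dotv ((norm2 ((Ad *m A) *m evec R i))^-1 *: ((Ad *m A) *m evec R i)) c < 1) ->
  forall s : option R,
    ext_ge (norminf xs) s ->
    forall y : 'cV[R]_n,
      is_argmin (fun x => boxed s x /\ A *m x = b)
                (fun x => norm1 (Wmat A Ad *m x)) y ->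
      is_argmin_nat (fun x => boxed s x /\ A *m x = b) (@l0 R n) y
      /\ supp y = supp xs.
Proof.
move=> [AAdA _ _ _] Aei_neq0 _ [[xs_ge0 Axs] xs_min] dot_on dot_off s s_ge y
  [[y_box Ay] y_min].
have w_gt0 i : 0 < wcoef A Ad i by exact: wcoef_gt0.
have d_eq_on i : i \in supp xs -> dual_coef A Ad c i = wcoef A Ad i.
  by move/dot_on; apply: dual_coef_eq.
have d_lt_off i : i \notin supp xs -> dual_coef A Ad c i < wcoef A Ad i.
  by move/dot_off; apply: dual_coef_lt.
have y_ge0 := boxed_nonneg y_box.
have xs_box := nonneg_boxed xs_ge0 s_ge.
have le_wy := y_min xs (conj xs_box Axs).
rewrite !norm1_Wmat // in le_wy.
have ysub : supp y \subset supp xs.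
  have A_eq : A *m y = A *m xs by rewrite Ay Axs.
  have pairing_congr := @dual_pairing_congr R m n A Ad c.
  exact: (certified_supp d_eq_on d_lt_off pairing_congr y_ge0 (subxx _) A_eq le_wy).
have supp_y := supp_eq_of_subset ysub (xs_min y (conj y_ge0 Ay)).
split=> //; split=> [|z [z_box Az]]; first by [].
by rewrite /l0 supp_y; apply: xs_min; split=> //; exact: boxed_nonneg z_box.
Qed.
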